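(* Let $R$ be a unital ring with involution and let $a,b\in R$ both be core invertible with $a\overset{\circledast}{\leq} b$. Then: (1) $ba^{\circledast}=ab^{\circledast}$ and $a^{\circledast}b=b^{\circledast}a$; (2) $b^{\circledast}ba^{\circledast}=a^{\circledast}bb^{\circledast}=a^{\circledast}ba^{\circledast}=a^{\circledast}$; (3) $b^{\circledast}aa^{\circledast}=a^{\circledast}ab^{\circledast}=b^{\circledast}ab^{\circledast}=a^{\circledast}$.
   Context: $R$ is a ring with identity and an involution $x\mapsto x^{*}$. An element $a\in R$ is core invertible if there exists $x\in R$ with $axa=a$, $xR=aR$ and $Rx=Ra^{*}$; such $x$ is unique, called the core inverse of $a$ and denoted $a^{\circledast}$. For $a$ core invertible and $b\in R$, $a\overset{\circledast}{\leq} b$ means $a^{\circledast}a=a^{\circledast}b$ and $aa^{\circledast}=ba^{\circledast}$. *)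

From HB Require Import structures.
From mathcomp Require Import all_boot all_order all_algebra.
Set Implicit Arguments. Unset Strict Implicit. Unset Printing Implicit Defensive.
Import GRing.Theory.
Local Open Scope ring_scope.

Definition is_involution (R : pzRingType) (inv : R -> R) : Prop :=
  (forall x y : R, inv (x + y) = inv x + inv y) /\
  (forall x y : R, inv (x * y) = inv y * inv x) /\
  (forall x : R, inv (inv x) = x).

Definition right_ideal_eq (R : pzRingType) (x a : R) : Prop :=
  forall z : R, (exists r, z = x * r) <-> (exists r, z = a * r).
Definition left_ideal_eq (R : pzRingType) (x a : R) : Prop :=
  forall z : R, (exists r, z = r * x) <-> (exists r, z = r * a).

Definition core_inverse (R : pzRingType) (inv : R -> R) (a x : R) : Prop :=
  a * x * a = a /\ right_ideal_eq x a /\ left_ideal_eq x (inv a).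

Definition core_invertible (R : pzRingType) (inv : R -> R) (a : R) : Prop :=
  exists x, core_inverse inv a x.

(* Core partial order a <=# b, where ac is the core inverse of a:
   ac a = ac b and a ac = b ac. *)
Definition core_le (R : pzRingType) (ac a b : R) : Prop :=
  ac * a = ac * b /\ a * ac = b * ac.

(* Both [p = a a#] and [q = b b#] are self-adjoint idempotents, and the core
   order gives [q p = p]; taking adjoints yields [p q = p].  Hence
   [a a# = a a# b b# = a a# a b# = a b#], and together with
   [a# = b a# a#] and [b# b a# = a#] all the identities reduce to the two
   defining equations of the order. *)

From HB Require Import structures.
From mathcomp Require Import all_boot all_order all_algebra.
Import GRing.Theory.
Local Open Scope ring_scope.

Set Implicit Arguments.
Unset Strict Implicit.

Section CoreInverse.

Variables (R : pzRingType) (inv : R -> R).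
Hypothesis inv_involution : is_involution inv.

Section OneElement.

Variables (a x : R).
Hypothesis core_ax : core_inverse inv a x.

Lemma core_inverse_outer_adjoint : x = x * inv (a * x).
Proof.
have [_ [iM _]] := inv_involution; have [axa [_ Hl]] := core_ax.
have [s xs] : exists s, x = s * inv a by apply/Hl; exists 1; rewrite mul1r.
have inv_axa : inv a * inv x * inv a = inv a by rewrite -mulrA -iM -iM axa.
by rewrite iM mulrA {1}xs -{1}inv_axa !mulrA -xs.
Qed.

Lemma core_inverse_adjoint_mul : inv (a * x) = a * x.
Proof.
have [_ [iM iK]] := inv_involution.
have ax_idem : a * x = a * x * inv (a * x).
  by rewrite -mulrA -core_inverse_outer_adjoint.
by rewrite {1}ax_idem iM iK.
Qed.

Lemma core_inverse_outer : x * a * x = x.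
Proof.
by rewrite -mulrA -core_inverse_adjoint_mul -core_inverse_outer_adjoint.
Qed.

Lemma core_inverse_lmul_sqr : x * a * a = a.
Proof.
have [_ [Hr _]] := core_ax.
have [r ar] : exists r, a = x * r by apply/Hr; exists 1; rewrite mulr1.
by rewrite {2}ar mulrA core_inverse_outer -ar.
Qed.

Lemma core_inverse_rmul_sqr : a * x * x = x.
Proof.
have [axa [Hr _]] := core_ax.
have [r xr] : exists r, x = a * r by apply/Hr; exists 1; rewrite mulr1.
by rewrite {2}xr mulrA axa -xr.
Qed.

End OneElement.

Section CoreOrder.

Variables (a b ac bc : R).
Hypotheses (core_aac : core_inverse inv a ac) (core_bbc : core_inverse inv b bc).
Hypothesis a_le_b : core_le ac a b.

Lemma core_le_proj_mull : b * bc * (a * ac) = a * ac.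
Proof.
have [_ le_r] := a_le_b; have [bbcb _] := core_bbc.
by rewrite le_r !mulrA bbcb.
Qed.

Lemma core_le_proj_mulr : a * ac * (b * bc) = a * ac.
Proof.
have [_ [iM _]] := inv_involution.
rewrite -{1}(core_inverse_adjoint_mul core_aac).
rewrite -(core_inverse_adjoint_mul core_bbc) -iM core_le_proj_mull.
exact: core_inverse_adjoint_mul core_aac.
Qed.

Lemma core_le_mul_coreE : a * ac = a * bc.
Proof.
have [le_l _] := a_le_b; have [aaca _] := core_aac.
by rewrite -core_le_proj_mulr mulrA -[a * ac * b]mulrA -le_l !mulrA aaca.
Qed.

Lemma core_le_core_mulr_proj : ac * (b * bc) = ac.
Proof.
rewrite -{2}(core_inverse_outer core_aac) -[ac * a * ac]mulrA.
by rewrite -core_le_proj_mulr !mulrA (core_inverse_outer core_aac).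
Qed.

Lemma core_le_core_mulKl : bc * b * ac = ac.
Proof.
have [_ le_r] := a_le_b.
have ac_eq : ac = b * (ac * ac).
  by rewrite mulrA -le_r (core_inverse_rmul_sqr core_aac).
by rewrite {1}ac_eq !mulrA (core_inverse_lmul_sqr core_bbc) -mulrA -ac_eq.
Qed.

Lemma core_le_core_mulE : bc * a = ac * a.
Proof.
have [_ le_r] := a_le_b; have [aaca _] := core_aac.
by rewrite -{1}aaca le_r !mulrA core_le_core_mulKl.
Qed.

End CoreOrder.

End CoreInverse.

Theorem theorem2p6 (R : pzRingType) (inv : R -> R) (a b ac bc : R) :
  is_involution inv ->
  core_inverse inv a ac ->
  core_inverse inv b bc ->
  core_le ac a b ->
  [/\ (b * ac = a * bc /\ ac * b = bc * a),
      (bc * b * ac = ac /\ ac * b * bc = ac /\ ac * b * ac = ac)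
    & (bc * a * ac = ac /\ ac * a * bc = ac /\ bc * a * bc = ac)].
Proof.
move=> inv_inv core_a core_b le_ab; have [le_l le_r] := le_ab.
have acE := core_le_mul_coreE inv_inv core_a core_b le_ab.
have bcaE := core_le_core_mulE inv_inv core_a core_b le_ab.
have ac_proj := core_le_core_mulr_proj inv_inv core_a core_b le_ab.
have ac_outer := core_inverse_outer inv_inv core_a.
split; split => //.
- by rewrite -le_r acE.
- by rewrite -le_l bcaE.
- exact: core_le_core_mulKl core_b le_ab.
- by split; [rewrite -mulrA ac_proj | rewrite -le_l].
- by rewrite bcaE.
- by split; rewrite ?bcaE le_l -mulrA ac_proj.
Qed.
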